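(* Let $c:[0,2\pi]\to\mathbb{R}^2$ be a regular closed plane curve of class $C^3$ with curvature $k_c$, let $r_0\in\mathbb{R}^2$, and let $p(t)=\langle c-r_0,N\rangle N+r_0$ be its pedal curve with respect to $r_0$. Then $p$ is strongly convex if and only if for all $t\in[0,2\pi)$ $$k_p(t):=\frac{k_c\{-2k_c\langle r_0-c,T\rangle^2+\langle r_0-c,N\rangle-2k_c\langle r_0-c,N\rangle^2\}}{\langle c,N\rangle\langle r_0,N\rangle+\langle c,T\rangle\langle r_0,T\rangle-\langle c,N\rangle^2-\langle r_0,T\rangle^2}>0,$$ where all quantities are evaluated at $t$.
   Context: For a regular plane curve $c(t)=(x(t),y(t))$, $T=\dot c/|\dot c|$ is the unit tangent, $N=(-\dot y,\dot x)/|\dot c|$ the unit normal, and $k_c=\langle \ddot c,N\rangle/|\dot c|^2$ the curvature, so that $\dot T=|\dot c|k_cN$, $\dot N=-|\dot c|k_cT$. The pedal curve of $c$ with respect to $r_0$ is $p(t)=\langle c(t)-r_0,N(t)\rangle N(t)+r_0$. For $u=(u_1,u_2),v=(v_1,v_2)$ set $u\times v=u_1v_2-u_2v_1$. A closed plane curve $p(t)$ is called strongly convex if $\dfrac{\dot p(t)\times\ddot p(t)}{p(t)\times\dot p(t)}>0$ for all $t$. *)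

From Stdlib Require Import Reals.
From Coquelicot Require Import Coquelicot.
Open Scope R_scope.

Definition dot (u v : R * R) : R := fst u * fst v + snd u * snd v.
Definition cross (u v : R * R) : R := fst u * snd v - snd u * fst v.

Definition C3 (f : R -> R) : Prop :=
  forall t, ex_derive f t /\ ex_derive (Derive_n f 1) t /\
            ex_derive (Derive_n f 2) t /\ continuous (Derive_n f 3) t.

Definition pt (x y : R -> R) (t : R) : R * R := (x t, y t).
Definition vel (x y : R -> R) (t : R) : R * R := (Derive x t, Derive y t).
Definition acc (x y : R -> R) (t : R) : R * R := (Derive_n x 2 t, Derive_n y 2 t).
Definition speed (x y : R -> R) (t : R) : R :=
  sqrt (Derive x t ^ 2 + Derive y t ^ 2).

Definition tangent (x y : R -> R) (t : R) : R * R :=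
  (Derive x t / speed x y t, Derive y t / speed x y t).
Definition normal (x y : R -> R) (t : R) : R * R :=
  (- Derive y t / speed x y t, Derive x t / speed x y t).

Definition curvature (x y : R -> R) (t : R) : R :=
  dot (acc x y t) (normal x y t) / speed x y t ^ 2.

Definition regular (x y : R -> R) : Prop := forall t, vel x y t <> (0, 0).

(* closed curve on [0, 2 pi], represented by its 2 pi-periodic extension *)
Definition closed_curve (x y : R -> R) : Prop :=
  forall t, x (t + 2 * PI) = x t /\ y (t + 2 * PI) = y t.

Definition vsub (u v : R * R) : R * R := (fst u - fst v, snd u - snd v).

Definition pedal_x (x y : R -> R) (r0 : R * R) (t : R) : R :=
  dot (vsub (pt x y t) r0) (normal x y t) * fst (normal x y t) + fst r0.
Definition pedal_y (x y : R -> R) (r0 : R * R) (t : R) : R :=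
  dot (vsub (pt x y t) r0) (normal x y t) * snd (normal x y t) + snd r0.

Definition strongly_convex (px py : R -> R) : Prop :=
  forall t, cross (vel px py t) (acc px py t) / cross (pt px py t) (vel px py t) > 0.

Definition kp (x y : R -> R) (r0 : R * R) (t : R) : R :=
  let c := pt x y t in
  let T := tangent x y t in
  let N := normal x y t in
  let k := curvature x y t in
  let d := vsub r0 c in
  (k * (- 2 * k * dot d T ^ 2 + dot d N - 2 * k * dot d N ^ 2)) /
  (dot c N * dot r0 N + dot c T * dot r0 T - dot c N ^ 2 - dot r0 T ^ 2).

From Stdlib Require Import Reals Lra Lia ZArith.
From Coquelicot Require Import Coquelicot.
Open Scope R_scope.

(* Write J for the rotation by +90 degrees, so that N = J c' / |c'|.  Then
   p - r0 = h J c'  with  h = <c - r0, J c'> / |c'|^2,  a rational function of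
   the jet (c, c') that involves no square root.  Differentiating twice gives
   p' and p'' as explicit rational functions of the jet (c, c', c'', c''')
   (pedal_pos, pedal_vel, pedal_acc below), and a field computation shows
   that the third derivative cancels from the convexity ratio:
       (p' x p'') / (p x p') = |c'|^2 k_p.
   Since |c'|^2 > 0 for a regular curve, p is strongly convex iff k_p > 0
   everywhere; and since c is 2 pi-periodic, so is k_p, hence it suffices to
   check k_p > 0 on [0, 2 pi). *)

Definition vadd (u v : R * R) : R * R := (fst u + fst v, snd u + snd v).
Definition vscale (k : R) (u : R * R) : R * R := (k * fst u, k * snd u).
Definition rot90 (u : R * R) : R * R := (- snd u, fst u).

(* For d = c - r0 and the jet v = c', w = c'', z = c''', the coefficient
   h = <d, J v> / |v|^2 of the pedal point p = r0 + h J v, and its first and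
   second derivatives along the curve (using d' = v and <v, J v> = 0). *)
Definition foot_coef (d v : R * R) : R := dot d (rot90 v) / dot v v.
Definition foot_coef1 (d v w : R * R) : R :=
  let s := dot v v in
  dot d (rot90 w) / s - dot d (rot90 v) * (2 * dot v w) / s ^ 2.
Definition foot_coef2 (d v w z : R * R) : R :=
  let s := dot v v in
  let H := dot d (rot90 v) in
  let H1 := dot d (rot90 w) in
  let H2 := dot v (rot90 w) + dot d (rot90 z) in
  let s1 := 2 * dot v w in
  let s2 := 2 * (dot w w + dot v z) in
  H2 / s - 2 * H1 * s1 / s ^ 2 - H * s2 / s ^ 2 + 2 * H * s1 ^ 2 / s ^ 3.

Definition pedal_pos (c r0 v : R * R) : R * R :=
  vadd (vscale (foot_coef (vsub c r0) v) (rot90 v)) r0.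
Definition pedal_vel (c r0 v w : R * R) : R * R :=
  let d := vsub c r0 in
  vadd (vscale (foot_coef1 d v w) (rot90 v)) (vscale (foot_coef d v) (rot90 w)).
Definition pedal_acc (c r0 v w z : R * R) : R * R :=
  let d := vsub c r0 in
  vadd (vscale (foot_coef2 d v w z) (rot90 v))
       (vadd (vscale (2 * foot_coef1 d v w) (rot90 w)) (vscale (foot_coef d v) (rot90 z))).

(* k_p written in the unnormalized frame (v, J v): with s = |v|^2, K = v x w
   (the curvature is K / s^(3/2)), H = <d, J v> and U = <d, v>, it equals
   -K (2K (H^2 + U^2) + H s^2) / (s^3 D), where D is s times the denominator
   of k_p.  No square root occurs. *)
Definition frame_kp (c r0 v w : R * R) : R :=
  let n := rot90 v in
  let d := vsub c r0 in
  let s := dot v v in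
  let K := cross v w in
  let P := 2 * K * (dot d n ^ 2 + dot d v ^ 2) + dot d n * s ^ 2 in
  let D := dot c n * dot r0 n + dot c v * dot r0 v - dot c n ^ 2 - dot r0 v ^ 2 in
  - K * P / (s ^ 3 * D).

Ltac unfold_vectors := unfold pedal_pos, pedal_vel, pedal_acc,
  foot_coef, foot_coef1, foot_coef2, vadd, vscale, rot90, vsub, dot, cross; cbn [fst snd].

Lemma cross_pedal_vel_acc (c r0 v w z : R * R) : dot v v <> 0 ->
  let s := dot v v in let K := cross v w in
  let d := vsub c r0 in let n := rot90 v in
  cross (pedal_vel c r0 v w) (pedal_acc c r0 v w z) =
  K ^ 2 * (2 * K * (dot d n ^ 2 + dot d v ^ 2) + dot d n * s ^ 2) / s ^ 4.
Proof.
destruct c as [cx cy], r0 as [rx ry], v as [a b], w as [a2 b2], z as [a3 b3].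
intros Hs; cbv zeta; unfold_vectors; unfold dot in Hs; cbn [fst snd] in Hs.
field; exact Hs.
Qed.

Lemma cross_pedal_pos_vel (c r0 v w : R * R) : dot v v <> 0 ->
  let s := dot v v in let K := cross v w in let n := rot90 v in
  cross (pedal_pos c r0 v) (pedal_vel c r0 v w) =
  - K * (dot c n * dot r0 n + dot c v * dot r0 v - dot c n ^ 2 - dot r0 v ^ 2) / s ^ 2.
Proof.
destruct c as [cx cy], r0 as [rx ry], v as [a b], w as [a2 b2].
intros Hs; cbv zeta; unfold_vectors; unfold dot in Hs; cbn [fst snd] in Hs.
field; exact Hs.
Qed.

(* The convexity ratio of the pedal jet is |v|^2 times frame_kp, including the
   degenerate cases K = 0 or D = 0, where both sides are 0 (x / 0 = 0 in R). *)
Lemma pedal_ratio_frame (c r0 v w z : R * R) : dot v v <> 0 ->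
  cross (pedal_vel c r0 v w) (pedal_acc c r0 v w z) /
  cross (pedal_pos c r0 v) (pedal_vel c r0 v w) = dot v v * frame_kp c r0 v w.
Proof.
intros Hs.
rewrite (cross_pedal_vel_acc c r0 v w z Hs), (cross_pedal_pos_vel c r0 v w Hs).
unfold frame_kp; cbv zeta.
set (s := dot v v) in *; set (K := cross v w).
set (P := 2 * K * _ + _); set (D := _ - dot r0 v ^ 2).
destruct (Req_dec K 0) as [HK|HK].
{ rewrite HK; unfold Rdiv; ring. }
destruct (Req_dec D 0) as [HD|HD].
{ rewrite HD; unfold Rdiv; rewrite !Rmult_0_r, !Rmult_0_l, Rinv_0; ring. }
field; auto.
Qed.

Lemma speed_sq (x y : R -> R) (t : R) : speed x y t ^ 2 = dot (vel x y t) (vel x y t).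
Proof.
unfold speed, vel, dot; cbn [fst snd].
rewrite pow2_sqrt; [ring | nra].
Qed.

Lemma speed_sq_pos (x y : R -> R) (t : R) :
  vel x y t <> (0, 0) -> 0 < dot (vel x y t) (vel x y t).
Proof.
unfold vel, dot; cbn [fst snd]; intros Hv.
destruct (Req_dec (Derive x t) 0) as [Hx|Hx]; [|nra].
destruct (Req_dec (Derive y t) 0) as [Hy|Hy]; [|nra].
exfalso; apply Hv; rewrite Hx, Hy; reflexivity.
Qed.

Lemma vel_nonzero_dot (x y : R -> R) (t : R) :
  vel x y t <> (0, 0) -> dot (vel x y t) (vel x y t) <> 0.
Proof. intros Hv; exact (Rgt_not_eq _ _ (speed_sq_pos x y t Hv)). Qed.

Lemma pedal_point_eq (x y : R -> R) (r0 : R * R) (t : R) : vel x y t <> (0, 0) ->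
  pt (pedal_x x y r0) (pedal_y x y r0) t = pedal_pos (pt x y t) r0 (vel x y t).
Proof.
intros Hv. pose proof (vel_nonzero_dot x y t Hv) as Hs. pose proof (speed_sq x y t) as Hsp.
destruct r0 as [rx ry].
assert (Hv0 : speed x y t <> 0) by (intro E; apply Hs; rewrite <- Hsp, E; ring).
unfold pedal_pos, foot_coef; rewrite <- Hsp.
unfold pedal_x, pedal_y, normal, pt, vel, vadd, vscale, rot90, vsub, dot; cbn [fst snd].
f_equal; field; exact Hv0.
Qed.

Lemma kp_frame (x y : R -> R) (r0 : R * R) (t : R) : vel x y t <> (0, 0) ->
  kp x y r0 t = frame_kp (pt x y t) r0 (vel x y t) (acc x y t).
Proof.
intros Hv. pose proof (vel_nonzero_dot x y t Hv) as Hs. pose proof (speed_sq x y t) as Hsp.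
assert (Hv0 : speed x y t <> 0) by (intro E; apply Hs; rewrite <- Hsp, E; ring).
destruct r0 as [rx ry].
unfold frame_kp; cbv zeta.
set (n := rot90 _); set (d := vsub _ (rx, ry)); set (K := cross _ _).
set (P := 2 * K * _ + _); set (D := _ - dot (rx, ry) (vel x y t) ^ 2).
transitivity ((- K * P / dot (vel x y t) (vel x y t) ^ 4) / (D / dot (vel x y t) (vel x y t))).
- unfold kp, curvature, tangent, normal, P, D, K, n, d; cbv zeta; rewrite <- Hsp.
  unfold pt, vel, acc, rot90, vsub, dot, cross; cbn [fst snd].
  f_equal; field; exact Hv0.
- destruct (Req_dec D 0) as [HD|HD].
  + rewrite HD; unfold Rdiv; rewrite !Rmult_0_l, !Rmult_0_r, Rinv_0; ring.
  + field; auto.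
Qed.

(* auto_derive produces eta-expanded derivatives; this rewrites them away. *)
Lemma Derive_eta (f : R -> R) (t l : R) : is_derive f t l -> Derive (fun u => f u) t = l.
Proof. apply is_derive_unique. Qed.

Section PedalJet.
Variables (x y a b a2 b2 a3 b3 : R -> R) (r0 : R * R).
Hypothesis Dx : forall t, is_derive x t (a t).
Hypothesis Dy : forall t, is_derive y t (b t).
Hypothesis Da : forall t, is_derive a t (a2 t).
Hypothesis Db : forall t, is_derive b t (b2 t).
Hypothesis Da2 : forall t, is_derive a2 t (a3 t).
Hypothesis Db2 : forall t, is_derive b2 t (b3 t).
Hypothesis speed_nz : forall t, dot (a t, b t) (a t, b t) <> 0.

Ltac differentiate t :=
  pose proof (speed_nz t) as Hs; unfold dot in Hs; cbn [fst snd] in Hs;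
  unfold_vectors; auto_derive;
  [ repeat match goal with |- _ /\ _ => split end;
    match goal with
    | |- _ <> 0 =>
        repeat (apply Rmult_integral_contrapositive_currified || apply pow_nonzero);
        first [exact Hs | exact R1_neq_R0]
    | |- True => exact I
    | |- ex_derive (fun u => ?f u) ?s =>
        match goal with H : forall t, is_derive f t _ |- _ => exact (ex_intro _ _ (H s)) end
    end
  | rewrite ?(Derive_eta _ _ _ (Dx t)), ?(Derive_eta _ _ _ (Dy t)),
      ?(Derive_eta _ _ _ (Da t)), ?(Derive_eta _ _ _ (Db t)),
      ?(Derive_eta _ _ _ (Da2 t)), ?(Derive_eta _ _ _ (Db2 t));
    field; exact Hs ].

Lemma pedal_pos_derive (t : R) :
  is_derive (fun u => fst (pedal_pos (x u, y u) r0 (a u, b u))) t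
    (fst (pedal_vel (x t, y t) r0 (a t, b t) (a2 t, b2 t))) /\
  is_derive (fun u => snd (pedal_pos (x u, y u) r0 (a u, b u))) t
    (snd (pedal_vel (x t, y t) r0 (a t, b t) (a2 t, b2 t))).
Proof. split; differentiate t. Qed.

Lemma pedal_vel_derive (t : R) :
  is_derive (fun u => fst (pedal_vel (x u, y u) r0 (a u, b u) (a2 u, b2 u))) t
    (fst (pedal_acc (x t, y t) r0 (a t, b t) (a2 t, b2 t) (a3 t, b3 t))) /\
  is_derive (fun u => snd (pedal_vel (x u, y u) r0 (a u, b u) (a2 u, b2 u))) t
    (snd (pedal_acc (x t, y t) r0 (a t, b t) (a2 t, b2 t) (a3 t, b3 t))).
Proof. split; differentiate t. Qed.

End PedalJet.

Lemma C3_derive_chain (f : R -> R) : C3 f -> forall t,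
  is_derive f t (Derive f t) /\ is_derive (Derive f) t (Derive_n f 2 t) /\
  is_derive (Derive_n f 2) t (Derive_n f 3 t).
Proof.
intros Hf t; destruct (Hf t) as (H1 & H2 & H3 & _).
repeat split; apply Derive_correct; assumption.
Qed.

Section RegularCurve.
Variables (x y : R -> R) (r0 : R * R).
Hypothesis Cx : C3 x.
Hypothesis Cy : C3 y.
Hypothesis Hreg : regular x y.

Ltac curve_jet :=
  let u := fresh "u" in intro u; first
  [ apply (C3_derive_chain x Cx u) | apply (C3_derive_chain y Cy u)
  | apply (vel_nonzero_dot x y u (Hreg u)) ].

Lemma pedal_velocity (t : R) :
  vel (pedal_x x y r0) (pedal_y x y r0) t = pedal_vel (pt x y t) r0 (vel x y t) (acc x y t).
Proof.
destruct (pedal_pos_derive x y (Derive x) (Derive y) (Derive_n x 2) (Derive_n y 2) r0)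
  with (t := t) as [Dpx Dpy]; try curve_jet.
unfold vel; apply injective_projections; cbn [fst snd]; apply is_derive_unique.
- eapply is_derive_ext; [|exact Dpx].
  intro u; exact (f_equal fst (eq_sym (pedal_point_eq x y r0 u (Hreg u)))).
- eapply is_derive_ext; [|exact Dpy].
  intro u; exact (f_equal snd (eq_sym (pedal_point_eq x y r0 u (Hreg u)))).
Qed.

Lemma pedal_acceleration (t : R) :
  acc (pedal_x x y r0) (pedal_y x y r0) t =
  pedal_acc (pt x y t) r0 (vel x y t) (acc x y t) (Derive_n x 3 t, Derive_n y 3 t).
Proof.
destruct (pedal_vel_derive x y (Derive x) (Derive y) (Derive_n x 2) (Derive_n y 2)
  (Derive_n x 3) (Derive_n y 3) r0) with (t := t) as [Dvx Dvy]; try curve_jet.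
unfold acc; apply injective_projections; cbn [fst snd Derive_n]; apply is_derive_unique.
- eapply is_derive_ext; [|exact Dvx].
  intro u; exact (f_equal fst (eq_sym (pedal_velocity u))).
- eapply is_derive_ext; [|exact Dvy].
  intro u; exact (f_equal snd (eq_sym (pedal_velocity u))).
Qed.

Lemma pedal_convexity_ratio (t : R) :
  let p := pedal_x x y r0 in let q := pedal_y x y r0 in
  cross (vel p q t) (acc p q t) / cross (pt p q t) (vel p q t) =
  dot (vel x y t) (vel x y t) * kp x y r0 t.
Proof.
cbv zeta.
rewrite pedal_point_eq, pedal_velocity, pedal_acceleration, pedal_ratio_frame, kp_frame;
  auto using vel_nonzero_dot.
Qed.

End RegularCurve.

Definition periodic (f : R -> R) (P : R) : Prop := forall t, f (t + P) = f t.

Lemma periodic_Z (f : R -> R) (P : R) :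
  periodic f P -> forall (z : Z) t, f (t + IZR z * P) = f t.
Proof.
intros Hf.
assert (Hn : forall n t, f (t + INR n * P) = f t).
{ induction n as [|n IH]; intros t.
  - f_equal; simpl; ring.
  - rewrite S_INR.
    replace (t + (INR n + 1) * P) with (t + INR n * P + P) by ring.
    rewrite Hf; apply IH. }
intros z t. destruct (Z_le_gt_dec 0 z) as [Hz|Hz].
- destruct (IZN z Hz) as [n ->]. rewrite <- INR_IZR_INZ. apply Hn.
- destruct (IZN (- z) ltac:(lia)) as [n Hn'].
  replace z with (- Z.of_nat n)%Z by lia. rewrite opp_IZR, <- INR_IZR_INZ.
  rewrite <- (Hn n (t + - INR n * P)). f_equal. ring.
Qed.

(* Reducing t modulo P into [0, P). *)
Lemma periodic_pos (f : R -> R) (P : R) : 0 < P -> periodic f P ->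
  (forall t, 0 <= t < P -> f t > 0) -> forall t, f t > 0.
Proof.
intros HP Hf Hpos t.
destruct (base_Int_part (t / P)) as [Hlo Hhi].
rewrite <- (periodic_Z f P Hf (- Int_part (t / P)) t), opp_IZR.
apply Hpos.
assert (Ht : t = t / P * P) by (field; lra).
set (n := IZR (Int_part (t / P))) in *.
split; nra.
Qed.

Lemma Derive_n_periodic (f : R -> R) (P : R) :
  periodic f P -> forall n, periodic (Derive_n f n) P.
Proof.
intros Hf n t. rewrite <- Derive_n_comp_trans.
apply Derive_n_ext; intro u; apply Hf.
Qed.

(* k_p depends only on the jet of the curve, hence is 2 pi-periodic. *)
Lemma kp_periodic (x y : R -> R) (r0 : R * R) :
  closed_curve x y -> periodic (kp x y r0) (2 * PI).
Proof.
intros Hcl t.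
assert (Hx : periodic x (2 * PI)) by (intro u; apply Hcl).
assert (Hy : periodic y (2 * PI)) by (intro u; apply Hcl).
unfold kp, curvature, tangent, normal, speed, acc, pt.
rewrite (Hx t), (Hy t).
change (Derive x) with (Derive_n x 1); change (Derive y) with (Derive_n y 1).
rewrite !(Derive_n_periodic x _ Hx), !(Derive_n_periodic y _ Hy).
reflexivity.
Qed.

Theorem mainTheorem3 (x y : R -> R) (r0 : R * R) :
  C3 x -> C3 y -> regular x y -> closed_curve x y ->
  (strongly_convex (pedal_x x y r0) (pedal_y x y r0) <->
   forall t, 0 <= t < 2 * PI -> kp x y r0 t > 0).
Proof.
intros Cx Cy Hreg Hcl. unfold strongly_convex.
setoid_rewrite (pedal_convexity_ratio x y r0 Cx Cy Hreg).
split.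
- intros Hc t _. specialize (Hc t). pose proof (speed_sq_pos x y t (Hreg t)). nra.
- intros Hk t. pose proof (speed_sq_pos x y t (Hreg t)).
  assert (kp x y r0 t > 0).
  { apply (periodic_pos _ (2 * PI)); auto using kp_periodic. pose proof PI_RGT_0; lra. }
  nra.
Qed.
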